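(* Let $q\in\mathbb{C}$ with $0<|q|\le 1$ and $A,B\in M_n$. (a) If $A,B\in\Pi^n_{s,\alpha}$ for some $\alpha\in[0,\pi/2)$, then $|q|^2 w_q(AB)\le \sec^2(\alpha)\, w_q(A)\,w_q(B)$. (b) If $A$ and $B$ are positive matrices, then $|q|^2 w_q(AB)\le w_q(A)\,w_q(B)$.
   Context: $M_n$ is the algebra of complex $n\times n$ matrices. For $|q|\le1$, $w_q(A)=\sup\{|\langle Ax,y\rangle|: \|x\|=\|y\|=1,\ \langle x,y\rangle=q\}$. For $\alpha\in[0,\pi/2)$, $S_\alpha=\{z:\operatorname{Re}z>0,\ |\operatorname{Im}z|\le\tan(\alpha)\operatorname{Re}z\}$ and $\Pi^n_{s,\alpha}=\{A\in M_n: W(A)\subseteq S_\alpha\}$, where $W(A)=\{\langle Ax,x\rangle:\|x\|=1\}$. Positive matrices are those in $\Pi^n_{s,0}$, i.e. positive definite matrices. *)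

From HB Require Import structures.
From mathcomp Require Import all_boot all_order all_algebra.
From mathcomp Require Import complex.
From mathcomp Require Import all_classical all_reals all_analysis.

Set Implicit Arguments.
Unset Strict Implicit.
Unset Printing Implicit Defensive.

Import Order.TTheory GRing.Theory Num.Theory.
Local Open Scope ring_scope.
Local Open Scope classical_set_scope.

Definition cdot (R : realType) (n : nat) (x y : 'cV[R[i]]_n) : R[i] :=
  \sum_(i < n) x i 0 * ((y i 0)^*)%C.

Definition cabs (R : realType) (z : R[i]) : R := Normc.normc z.

Definition wq (R : realType) (n : nat) (q : R[i]) (A : 'M[R[i]]_n) : R :=
  sup [set r : R | exists x y : 'cV[R[i]]_n,
         [/\ cdot x x = 1, cdot y y = 1, cdot x y = q &
             r = cabs (cdot (A *m x) y)]].

Definition numrange (R : realType) (n : nat) (A : 'M[R[i]]_n) : set R[i] :=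
  [set z | exists x : 'cV[R[i]]_n, cdot x x = 1 /\ z = cdot (A *m x) x].

Definition sector (R : realType) (alpha : R) : set R[i] :=
  [set z | 0 < complex.Re z /\ `|complex.Im z| <= tan alpha * complex.Re z].

Definition Pi_s (R : realType) (n : nat) (alpha : R) : set 'M[R[i]]_n :=
  [set A | numrange A `<=` sector alpha].

Definition positive_mx (R : realType) (n : nat) (A : 'M[R[i]]_n) : Prop :=
  Pi_s 0 A.

(* Write tau = tan alpha, so that sec^2 alpha = 1 + tau^2.  If the numerical range of A
   lies in the closed sector of slope tau, the forms of (tau - i) A and (tau + i) A have
   nonnegative real parts; the Cauchy-Schwarz inequalities for their Hermitian parts
   combine into |<Au,v>|^2 <= (1 + tau^2) Re<Au,u> Re<Av,v>.  Completing a unit vector u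
   to unit vectors y = q^* u +- z with <u,y> = q gives |q| Re<Aw,w> <= w_q(A) |w|^2.
   For unit x, y with <x,y> = q and z = Bx, the first bound for B at (x, z), where
   <Bx,z> = |z|^2, yields |q|^2 |z|^2 <= (1 + tau^2) w_q(B)^2, and the first bound for A
   at (z, y) then yields |q|^2 |<ABx,y>| <= (1 + tau^2) w_q(A) w_q(B). *)

From HB Require Import structures.
From mathcomp Require Import all_boot all_order all_algebra.
From mathcomp Require Import complex.
From mathcomp Require Import all_classical all_reals all_analysis.
From mathcomp Require Import ring lra.

Set Implicit Arguments.
Unset Strict Implicit.
Unset Printing Implicit Defensive.

Import Order.TTheory GRing.Theory Num.Theory.
Local Open Scope ring_scope.
Local Open Scope complex_scope.
(* Under ring operators a bare [z^*] parses as [Num.conj]; [z^*%C] is the [conjc] of [cdot]. *)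
Local Notation Re := complex.Re.
Local Notation Im := complex.Im.

Section ComplexFacts.
Variable R : realType.
Implicit Types (r : R) (z w : R[i]).

Lemma cabs_ge0 z : 0 <= cabs z.
Proof. by case: z => a b; rewrite /cabs /= sqrtr_ge0. Qed.

Lemma sqr_cabs z : cabs z ^+ 2 = Re z ^+ 2 + Im z ^+ 2.
Proof. by case: z => a b; rewrite /cabs /= sqr_sqrtr // addr_ge0 ?sqr_ge0. Qed.

Lemma cabsM z w : cabs (z * w) = cabs z * cabs w.
Proof. exact: Normc.normcM. Qed.

Lemma cabsD z w : cabs (z + w) <= cabs z + cabs w.
Proof. exact: le_normcD. Qed.

Lemma cabsN z : cabs (- z) = cabs z.
Proof. exact: normcN. Qed.

Lemma cabsMn z m : cabs (z *+ m) = cabs z *+ m.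
Proof. exact: normcMn. Qed.

Lemma cabs_conj z : cabs z^*%C = cabs z.
Proof. by case: z => a b; rewrite /cabs /= sqrrN. Qed.

Lemma cabs_real r : cabs r%:C = `|r|.
Proof. by rewrite /cabs /= expr0n /= addr0 sqrtr_sqr. Qed.

Lemma cabs0 : cabs 0 = 0 :> R.
Proof. exact: Normc.normc0. Qed.

Lemma cabs1 : cabs 1 = 1 :> R.
Proof. exact: Normc.normc1. Qed.

Lemma cabs_i : cabs 'i%C = 1 :> R.
Proof. by rewrite /cabs /= expr0n expr1n /= add0r sqrtr1. Qed.

Lemma Re_le_cabs z : Re z <= cabs z.
Proof.
have := cabs_ge0 z; have := sqr_cabs z; have := sqr_ge0 (Im z).
case: (lerP (Re z) 0); nra.
Qed.

Lemma mulcJ z : z * z^*%C = (cabs z ^+ 2)%:C.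
Proof. by rewrite sqr_cabs; case: z => a b; simpc; congr (_ +i* _); ring. Qed.

Lemma Re_realM r z : Re (r%:C * z) = r * Re z.
Proof. by case: z => a b; simpc. Qed.

Lemma Im_realM r z : Im (r%:C * z) = r * Im z.
Proof. by case: z => a b; simpc. Qed.

Definition closed_sector (tau : R) z := 0 <= Re z /\ `|Im z| <= tau * Re z.

Lemma closed_sector_rotate tau z : closed_sector tau z ->
  0 <= Re ((tau -i* 1) * z) /\ 0 <= Re ((tau +i* 1) * z).
Proof.
case: z => x y [/= x_ge0]; have := ler_norm y; have := ler_norm (- y).
by rewrite normrN; simpc => /=; lra.
Qed.

Lemma closed_sector0 z : closed_sector 0 z -> Im z = 0.
Proof. by case=> _; rewrite mul0r normr_le0 => /eqP. Qed.

End ComplexFacts.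

Section RealInequalities.
Variable R : realFieldType.
Implicit Types P Q D X Y a b c d : R.

Lemma quadratic_ge0_discr P Q D : 0 <= Q ->
  (forall s, 0 <= P + s * D + s ^+ 2 * (D * Q)) -> D <= 4 * P * Q.
Proof.
move=> Q0 hq; have P0 : 0 <= P by have := hq 0; rewrite expr0n /= !mul0r !addr0.
have [Qgt0|Qle0] := ltrP 0 Q.
  have := hq (- (2 * Q)^-1); set s := - _.
  have -> : P + s * D + s ^+ 2 * (D * Q) = P - D / (4 * Q).
    by rewrite /s; field; rewrite gt_eqF.
  by rewrite subr_ge0 ler_pdivrMr ?mulr_gt0 //; lra.
have Qe : Q = 0 by lra.
have [Dgt0|] := ltrP 0 D; last by rewrite Qe mulr0.
by have := hq (- ((P + 1) / D)); rewrite Qe mulNr divfK ?gt_eqF // !mulr0 addr0; lra.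
Qed.

Lemma sqr_add_le_cauchy_schwarz X Y a b c d : 0 <= X -> 0 <= Y ->
  0 <= a -> 0 <= b -> 0 <= c -> 0 <= d ->
  X ^+ 2 <= 4 * a * b -> Y ^+ 2 <= 4 * c * d ->
  (X + Y) ^+ 2 <= 4 * (a + c) * (b + d).
Proof.
move=> X0 Y0 a0 b0 c0 d0 hX hY.
have XY2 : (X * Y) ^+ 2 <= (2 * (a * d + c * b)) ^+ 2.
  have := sqr_ge0 (a * d - c * b).
  have : (X * Y) ^+ 2 <= (4 * a * b) * (4 * c * d)
    by rewrite exprMn; apply: ler_pM; rewrite ?sqr_ge0.
  nra.
have : X * Y <= 2 * (a * d + c * b).
  by rewrite -(ler_pXn2r (n := 2)) ?nnegrE //; nra.
nra.
Qed.

Lemma sqr_bounds_combine c N X K a b :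
  0 <= c -> 0 <= N -> 0 <= X -> 0 <= K -> 0 <= a -> 0 <= b ->
  (c * N) ^+ 2 <= K * b * (b * N) -> (c * X) ^+ 2 <= K * (a * N) * a ->
  c ^+ 2 * X <= K * (a * b).
Proof.
move=> c0 N0 X0 K0 a0 b0 hN hX.
have cN : c ^+ 2 * N <= K * b ^+ 2.
  have [N_gt0|N_le0] := ltrP 0 N; first by rewrite -(ler_pM2r N_gt0); lra.
  have -> : N = 0 by lra.
  by rewrite mulr0 mulr_ge0 ?sqr_ge0.
have c2X := ler_wpM2l (sqr_ge0 c) hX.
have Ka2cN := ler_wpM2l (mulr_ge0 K0 (sqr_ge0 a)) cN.
have : (c ^+ 2 * X) ^+ 2 <= (K * (a * b)) ^+ 2 by lra.
by rewrite ler_pXn2r ?nnegrE ?mulr_ge0 ?sqr_ge0.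
Qed.

End RealInequalities.

Section Vectors.
Variables (R : realType) (n : nat).
Local Notation V := 'cV[R[i]]_n.
Implicit Types (x y z u v w : V) (A : 'M[R[i]]_n) (a : R[i]) (r : R).

Lemma cdotDl x y z : cdot (x + y) z = cdot x z + cdot y z.
Proof. by rewrite /cdot -big_split; apply: eq_bigr => i _; rewrite mxE mulrDl. Qed.

Lemma cdotZl a x y : cdot (a *: x) y = a * cdot x y.
Proof. by rewrite /cdot mulr_sumr; apply: eq_bigr => i _; rewrite mxE mulrA. Qed.

Lemma cdotDr x y z : cdot x (y + z) = cdot x y + cdot x z.
Proof. by rewrite /cdot -big_split; apply: eq_bigr => i _; rewrite mxE rmorphD mulrDr. Qed.

Lemma cdotZr a x y : cdot x (a *: y) = a^*%C * cdot x y.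
Proof. by rewrite /cdot mulr_sumr; apply: eq_bigr => i _; rewrite mxE rmorphM mulrCA. Qed.

Lemma cdotNl x y : cdot (- x) y = - cdot x y.
Proof. by rewrite -scaleN1r cdotZl mulN1r. Qed.

Lemma cdotNr x y : cdot x (- y) = - cdot x y.
Proof. by rewrite -scaleN1r cdotZr rmorphN1 mulN1r. Qed.

Lemma cdotC x y : cdot y x = (cdot x y)^*%C.
Proof. by rewrite /cdot rmorph_sum; apply: eq_bigr => i _; rewrite rmorphM /= conjcK mulrC. Qed.

Lemma cdot0l y : cdot 0 y = 0.
Proof. by rewrite -(scale0r 0) cdotZl mul0r. Qed.

Definition sqnorm x : R := \sum_i cabs (x i 0) ^+ 2.

Lemma cdotii x : cdot x x = (sqnorm x)%:C.
Proof. by rewrite /cdot rmorph_sum; apply: eq_bigr => i _; rewrite mulcJ. Qed.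

Lemma sqnorm_ge0 x : 0 <= sqnorm x.
Proof. by rewrite sumr_ge0 // => i _; rewrite sqr_ge0. Qed.

Lemma sqnorm_eq0 x : (sqnorm x == 0) = (x == 0).
Proof.
apply/idP/eqP => [|->]; last by rewrite /sqnorm big1 // => i _; rewrite mxE cabs0 expr0n.
rewrite psumr_eq0 => [/allP x0|i _]; last exact: sqr_ge0.
apply/matrixP => i j; rewrite (ord1 j) mxE.
by have /implyP/(_ isT) := x0 i (mem_index_enum i); rewrite sqrf_eq0 => /eqP/Normc.eq0_normc.
Qed.

Lemma unit_sqnorm x : cdot x x = 1 -> sqnorm x = 1.
Proof. by rewrite cdotii => -[]. Qed.

Lemma sqnorm_scale r x : sqnorm (r%:C *: x) = r ^+ 2 * sqnorm x.
Proof.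
have := cdotii (r%:C *: x); rewrite cdotZl cdotZr cdotii mulrA mulcJ cabs_real.
by rewrite real_normK ?num_real // -rmorphM => -[].
Qed.

Lemma nonzero_scaled_unit w :
  w != 0 -> exists2 r, 0 < r & exists2 u, cdot u u = 1 & w = r%:C *: u.
Proof.
rewrite -sqnorm_eq0 => w0; have N0 : 0 < sqnorm w by rewrite lt_neqAle eq_sym w0 sqnorm_ge0.
set r := Num.sqrt (sqnorm w); have r0 : 0 < r by rewrite sqrtr_gt0.
exists r => //; exists (r^-1%:C *: w).
  rewrite cdotii sqnorm_scale exprVn sqr_sqrtr ?sqnorm_ge0 // mulVf ?gt_eqF //.
by rewrite scalerA -rmorphM mulfV ?gt_eqF // scale1r.
Qed.

Definition form A x y := cdot (A *m x) y.

Lemma form_scalemx a A x y : form (a *: A) x y = a * form A x y.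
Proof. by rewrite /form -scalemxAl cdotZl. Qed.

Lemma form_scale_real A r w : form A (r%:C *: w) (r%:C *: w) = (r ^+ 2)%:C * form A w w.
Proof.
rewrite /form -scalemxAr cdotZl cdotZr mulrA mulcJ cabs_real.
by rewrite real_normK ?num_real.
Qed.

Lemma form_expand A u v a :
  form A (u + a *: v) (u + a *: v) =
  form A u u + a^*%C * form A u v + a * form A v u + a * a^*%C * form A v v.
Proof. by rewrite /form mulmxDr -scalemxAr !cdotDl !cdotDr !cdotZl !cdotZr; ring. Qed.

Lemma Re_form_expand A u v a :
  Re (form A (u + a *: v) (u + a *: v)) =
  Re (form A u u) + Re (a * (form A v u + (form A u v)^*%C)) + cabs a ^+ 2 * Re (form A v v).
Proof.
rewrite form_expand sqr_cabs.
move: (form A u u) (form A u v) (form A v u) (form A v v) => [? ?] [? ?] [? ?] [? ?].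
by case: a => ? ? /=; ring.
Qed.

Lemma form_cauchy_schwarz A u v : (forall w, 0 <= Re (form A w w)) ->
  cabs (form A v u + (form A u v)^*%C) ^+ 2 <= 4 * Re (form A u u) * Re (form A v v).
Proof.
move=> psd; set W := _ + _.
(* At u + s W^* v the middle term is s |W|^2, so the real part is a quadratic in s. *)
apply: quadratic_ge0_discr (psd v) _ => s.
have := psd (u + (s%:C * W^*%C) *: v); rewrite Re_form_expand.
rewrite -mulrA (mulrC W^*%C) mulcJ -rmorphM cabsM cabs_real cabs_conj /=.
by rewrite exprMn real_normK ?num_real // mulrA.
Qed.

Lemma form_cauchy_schwarz_rotations A u v (mu nu : R[i]) : cabs mu = cabs nu ->
  (forall w, 0 <= Re (mu * form A w w)) -> (forall w, 0 <= Re (nu * form A w w)) ->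
  Im (nu * mu^*%C) ^+ 2 * cabs (form A u v) ^+ 2 <=
  cabs mu ^+ 2 * (Re (mu * form A u u) + Re (nu * form A u u)) *
                 (Re (mu * form A v v) + Re (nu * form A v v)).
Proof.
move=> eq_abs psd_mu psd_nu.
have cs a : (forall w, 0 <= Re (a * form A w w)) ->
    cabs (a * form A v u + (a * form A u v)^*%C) ^+ 2 <=
    4 * Re (a * form A u u) * Re (a * form A v v).
  by move=> psd; rewrite -!form_scalemx; apply: form_cauchy_schwarz => w; rewrite form_scalemx.
set b := form A u v; set c := form A v u.
set Wmu := mu * c + (mu * b)^*%C; set Wnu := nu * c + (nu * b)^*%C.
(* [Wmu], [Wnu] are values of the Hermitian parts of the two rotated forms. *)
have recover_b : nu * Wmu - mu * Wnu = ((2 * Im (nu * mu^*%C))%:C * 'i%C) * b^*%C.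
  rewrite /Wmu /Wnu; case: mu nu b c {eq_abs psd_mu psd_nu cs Wmu Wnu} => [? ?] [? ?] [? ?] [? ?].
  by simpc; apply/eqP; rewrite eq_complex /=; apply/andP; split; apply/eqP; ring.
have le_b : 2 * `|Im (nu * mu^*%C)| * cabs b <= cabs mu * (cabs Wmu + cabs Wnu).
  have := cabsD (nu * Wmu) (- (mu * Wnu)).
  rewrite recover_b cabsN !cabsM cabs_real cabs_i cabs_conj mulr1 normrM normr_nat.
  by rewrite -eq_abs mulrDr.
have := sqr_add_le_cauchy_schwarz (cabs_ge0 Wmu) (cabs_ge0 Wnu) (psd_mu u) (psd_mu v)
  (psd_nu u) (psd_nu v) (cs _ psd_mu) (cs _ psd_nu).
move/(ler_wpM2l (sqr_ge0 (cabs mu))); rewrite -exprMn.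
have b_ge0 : 0 <= 2 * `|Im (nu * mu^*%C)| * cabs b by rewrite !mulr_ge0 ?cabs_ge0.
move: (ler_pM b_ge0 b_ge0 le_b le_b); rewrite -!expr2 -[Im _ ^+ 2]real_normK ?num_real //.
lra.
Qed.

Lemma psd_cauchy_schwarz A u v : (forall w, closed_sector 0 (form A w w)) ->
  cabs (form A u v) ^+ 2 <= Re (form A u u) * Re (form A v v).
Proof.
move=> sect; have Re_i (z : R[i]) : Re ('i%C * z) = - Im z by rewrite mulrC ReiNIm.
have psd1 w : 0 <= Re (1 * form A w w) by rewrite mul1r; exact: (sect w).1.
have psdi w : 0 <= Re ('i%C * form A w w) by rewrite Re_i (closed_sector0 (sect w)) oppr0.
have := form_cauchy_schwarz_rotations u v (etrans (cabs1 R) (esym (cabs_i R))) psd1 psdi.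
have -> : Im ('i%C * 1^*%C) = 1 :> R by simpc.
by rewrite !mul1r !Re_i !(closed_sector0 (sect _)) cabs1 oppr0 !addr0 expr1n !mul1r.
Qed.

Lemma sectorial_cauchy_schwarz tau A u v : 0 <= tau ->
  (forall w, closed_sector tau (form A w w)) ->
  cabs (form A u v) ^+ 2 <= (1 + tau ^+ 2) * Re (form A u u) * Re (form A v v).
Proof.
move=> tau_ge0 sect; have [tau_gt0|tau_le0] := ltrP 0 tau; last first.
  (* At tau = 0 the rotations tau -+ i are parallel; use 1 and i instead. *)
  have tau0 : tau = 0 by lra.
  by rewrite tau0 expr0n addr0 mul1r; apply: psd_cauchy_schwarz; rewrite -tau0.
have Re_sum (z : R[i]) : Re ((tau -i* 1) * z) + Re ((tau +i* 1) * z) = 2 * tau * Re z.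
  by case: z => ? ?; simpc => /=; ring.
have abs_eq : cabs (tau -i* 1) = cabs (tau +i* 1) by rewrite /cabs /= sqrrN.
have := form_cauchy_schwarz_rotations u v abs_eq
  (fun w => (closed_sector_rotate (sect w)).1) (fun w => (closed_sector_rotate (sect w)).2).
have -> : Im ((tau +i* 1) * (tau -i* 1)^*%C) = 2 * tau by simpc => /=; ring.
rewrite !Re_sum [cabs (_ -i* _) ^+ 2]sqr_cabs /= sqrrN expr1n.
have -> : (tau ^+ 2 + 1) * (2 * tau * Re (form A u u)) * (2 * tau * Re (form A v v)) =
  (2 * tau) ^+ 2 * ((1 + tau ^+ 2) * Re (form A u u) * Re (form A v v)) by ring.
by rewrite ler_pM2l // exprn_gt0 // mulr_gt0.
Qed.

Lemma Pi_s_closed_sector alpha A :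
  Pi_s alpha A -> forall w, closed_sector (tan alpha) (form A w w).
Proof.
move=> hA w; have [->|w0] := eqVneq w 0.
  by rewrite /form mulmx0 cdot0l /closed_sector /= normr0 mulr0.
have [r r_gt0 [u hu ->]] := nonzero_scaled_unit w0.
have [/= Re_gt0 Im_le] : sector alpha (form A u u) by apply: hA; exists u.
rewrite form_scale_real /closed_sector Re_realM Im_realM normrM ger0_norm ?sqr_ge0 //.
split; first by rewrite mulr_ge0 ?sqr_ge0 // ltW.
by rewrite mulrCA ler_wpM2l ?sqr_ge0.
Qed.

End Vectors.

Section NumericalRadius.
Local Open Scope classical_set_scope.
Variables (R : realType) (n : nat).
Local Notation V := 'cV[R[i]]_n.
Implicit Types (x y z u v w : V) (A : 'M[R[i]]_n) (q : R[i]).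

Definition wq_feasible q := exists x y : V, [/\ cdot x x = 1, cdot y y = 1 & cdot x y = q].

Lemma cabs_sum (I : finType) (F : I -> R[i]) : cabs (\sum_i F i) <= \sum_i cabs (F i).
Proof.
apply: (big_ind2 (fun a b => cabs a <= b)) => [|a1 b1 a2 b2 h1 h2|//].
  by rewrite cabs0.
exact: le_trans (cabsD _ _) (lerD h1 h2).
Qed.

Lemma unit_coord_le1 x j : cdot x x = 1 -> cabs (x j 0) <= 1.
Proof.
move/unit_sqnorm; rewrite /sqnorm (bigD1 j) //=.
have : 0 <= \sum_(i | i != j) cabs (x i 0) ^+ 2 by apply: sumr_ge0 => i _; apply: sqr_ge0.
have := cabs_ge0 (x j 0); nra.
Qed.

Lemma cabs_form_le_entries A x y : cdot x x = 1 -> cdot y y = 1 ->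
  cabs (form A x y) <= \sum_i \sum_j cabs (A i j).
Proof.
move=> hx hy; apply: le_trans (cabs_sum _) (ler_sum _ _) => i _.
rewrite cabsM cabs_conj mxE.
apply: le_trans (ler_pM (cabs_ge0 _) (cabs_ge0 _) (cabs_sum _) (unit_coord_le1 i hy)) _.
rewrite mulr1; apply: ler_sum => j _; rewrite cabsM.
by rewrite -[leRHS]mulr1 ler_wpM2l ?cabs_ge0 ?unit_coord_le1.
Qed.

Lemma le_wq q A x y : cdot x x = 1 -> cdot y y = 1 -> cdot x y = q ->
  cabs (form A x y) <= wq q A.
Proof.
move=> hx hy hxy; apply: ub_le_sup; last by exists x, y.
by exists (\sum_i \sum_j cabs (A i j)) => _ [x' [y' [hx' hy' _ ->]]]; apply: cabs_form_le_entries.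
Qed.

Lemma wq_le q A M : 0 <= M ->
  (forall x y, cdot x x = 1 -> cdot y y = 1 -> cdot x y = q -> cabs (form A x y) <= M) ->
  wq q A <= M.
Proof.
move=> M_ge0 bound; rewrite /wq; set S := (X in sup X).
have [S0|/set0P S_ne0] := eqVneq S set0; first by rewrite S0 sup0.
by apply: ge_sup S_ne0 _ => _ [x [y [hx hy hxy ->]]]; apply: bound.
Qed.

Lemma wq_ge0 q A : 0 <= wq q A.
Proof.
rewrite /wq; set S := (X in sup X).
have [S0|/set0P [_ [x [y [hx hy hxy _]]]]] := eqVneq S set0; first by rewrite S0 sup0.
exact: le_trans (cabs_ge0 _) (le_wq A hx hy hxy).
Qed.

Lemma exists_orthogonal_unit q u : wq_feasible q -> cabs q < 1 -> cdot u u = 1 ->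
  exists z, cdot z z = 1 /\ cdot z u = 0.
Proof.
move=> [x [y [hx hy hxy]]] q_lt1 hu.
pose proj w := w - cdot w u *: u.
have proj_orth w : cdot (proj w) u = 0 by rewrite cdotDl cdotNl cdotZl hu mulr1 subrr.
suff [w w0] : exists w, proj w != 0.
  have [r r_gt0 [z hz ez]] := nonzero_scaled_unit w0; exists z; split=> //.
  move: (proj_orth w); rewrite ez cdotZl => /eqP; rewrite mulf_eq0 => /orP[|/eqP//].
  by rewrite fmorph_eq0 gt_eqF.
have [px|] := eqVneq (proj x) 0; last by exists x.
have [py|] := eqVneq (proj y) 0; last by exists y.
set a := cdot x u; set b := cdot y u.
have ex : x = a *: u by apply/eqP; rewrite -subr_eq0; apply/eqP.
have ey : y = b *: u by apply/eqP; rewrite -subr_eq0; apply/eqP.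
have unit_coef c : cdot (c *: u) (c *: u) = 1 -> c * c^*%C = 1.
  by rewrite cdotZl cdotZr hu mulr1.
have : (cabs q ^+ 2)%:C = 1.
  rewrite -mulcJ -hxy -cdotC ex ey !cdotZl !cdotZr hu !mulr1.
  have -> : a * b^*%C * (b * a^*%C) = (a * a^*%C) * (b * b^*%C) by ring.
  by rewrite !unit_coef -?ex -?ey // mulr1.
case=> q2; have := cabs_ge0 q; nra.
Qed.

Lemma exists_orthogonal_sqnorm q u : wq_feasible q -> cabs q <= 1 -> cdot u u = 1 ->
  exists z, cdot z u = 0 /\ cdot z z = (1 - cabs q ^+ 2)%:C.
Proof.
move=> feas q_le1 hu; have q_ge0 := cabs_ge0 q.
have [q_lt1|q_ge1] := ltrP (cabs q) 1.
  have [z [hz hzu]] := exists_orthogonal_unit feas q_lt1 hu.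
  exists ((Num.sqrt (1 - cabs q ^+ 2))%:C *: z).
  rewrite cdotZl hzu mulr0 cdotii sqnorm_scale (unit_sqnorm hz) mulr1 sqr_sqrtr //.
  nra.
exists 0; rewrite !cdot0l; split=> //.
have -> : cabs q = 1 by lra.
by rewrite expr1n subrr.
Qed.

Lemma cabs_mul_form_le_wq q A u : wq_feasible q -> cabs q <= 1 -> cdot u u = 1 ->
  cabs q * cabs (form A u u) <= wq q A.
Proof.
move=> feas q_le1 hu; have [z [hzu hz]] := exists_orthogonal_sqnorm feas q_le1 hu.
(* q^* u + z and q^* u - z are both admissible partners of u; averaging cancels z. *)
have partner_bound z' : cdot z' u = 0 -> cdot z' z' = (1 - cabs q ^+ 2)%:C ->
    cabs (q * form A u u + form A u z') <= wq q A.
  move=> hzu' hz'; have huz' : cdot u z' = 0 by rewrite cdotC hzu' conjc0.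
  have -> : q * form A u u + form A u z' = form A u (q^*%C *: u + z').
    by rewrite /form cdotDr cdotZr conjcK.
  apply: (le_wq _ hu); last by rewrite cdotDr cdotZr conjcK hu mulr1 huz' addr0.
  rewrite cdotDl !cdotDr !cdotZl !cdotZr hu hzu' huz' hz' conjcK mulr1 !mulr0 !addr0 add0r.
  by rewrite mulrC mulcJ -rmorphD /= addrC subrK.
have bound_minus : cabs (q * form A u u - form A u z) <= wq q A.
  have -> : q * form A u u - form A u z = q * form A u u + form A u (- z).
    by rewrite /form cdotNr.
  by apply: partner_bound; rewrite ?cdotNl ?cdotNr ?opprK ?hzu ?oppr0.
have := cabsD (q * form A u u + form A u z) (q * form A u u - form A u z).
rewrite addrACA subrr addr0 -mulr2n cabsMn cabsM mulr2n.
have := partner_bound z hzu hz; lra.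
Qed.

Lemma Re_form_le_wq q A w : wq_feasible q -> cabs q <= 1 ->
  cabs q * Re (form A w w) <= wq q A * sqnorm w.
Proof.
move=> feas q_le1; have [->|w0] := eqVneq w 0.
  have /eqP -> : sqnorm (0 : V) == 0 by rewrite sqnorm_eq0.
  by rewrite /form mulmx0 cdot0l /= !mulr0.
have [r r_gt0 [u hu ->]] := nonzero_scaled_unit w0.
rewrite form_scale_real Re_realM sqnorm_scale (unit_sqnorm hu) mulr1 mulrCA mulrC.
rewrite ler_pM2r ?exprn_gt0 //.
exact: le_trans (ler_wpM2l (cabs_ge0 q) (Re_le_cabs _)) (cabs_mul_form_le_wq A feas q_le1 hu).
Qed.

Lemma sectorial_form_le_wq tau q A u v : 0 <= tau ->
  (forall w, closed_sector tau (form A w w)) -> wq_feasible q -> cabs q <= 1 ->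
  (cabs q * cabs (form A u v)) ^+ 2 <=
  (1 + tau ^+ 2) * (wq q A * sqnorm u) * (wq q A * sqnorm v).
Proof.
move=> tau_ge0 sect feas q_le1; rewrite exprMn.
apply: le_trans (ler_wpM2l (sqr_ge0 _) (sectorial_cauchy_schwarz u v tau_ge0 sect)) _.
have -> : cabs q ^+ 2 * ((1 + tau ^+ 2) * Re (form A u u) * Re (form A v v)) =
  (1 + tau ^+ 2) * (cabs q * Re (form A u u)) * (cabs q * Re (form A v v)) by ring.
have Re_ge0 w : 0 <= cabs q * Re (form A w w) by rewrite mulr_ge0 ?cabs_ge0 ?(sect w).1.
rewrite -mulrA -[leRHS]mulrA ler_wpM2l ?addr_ge0 ?sqr_ge0 //.
by apply: ler_pM; rewrite ?Re_ge0 ?Re_form_le_wq.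
Qed.

Lemma wq_mul_sectorial_le tau q A B : 0 <= tau -> cabs q <= 1 ->
  (forall w, closed_sector tau (form A w w)) -> (forall w, closed_sector tau (form B w w)) ->
  cabs q ^+ 2 * wq q (A *m B) <= (1 + tau ^+ 2) * (wq q A * wq q B).
Proof.
move=> tau_ge0 q_le1 sectA sectB.
have rhs_ge0 : 0 <= (1 + tau ^+ 2) * (wq q A * wq q B).
  by rewrite !mulr_ge0 ?addr_ge0 ?ler01 ?sqr_ge0 ?wq_ge0.
have [q_gt0|q_le0] := ltrP 0 (cabs q); last first.
  have -> : cabs q = 0 by have := cabs_ge0 q; lra.
  by rewrite expr0n mul0r.
rewrite mulrC -ler_pdivlMr ?exprn_gt0 //.
apply: wq_le => [|x y hx hy hxy]; first by rewrite divr_ge0 ?sqr_ge0.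
have feas : wq_feasible q by exists x, y.
have := sectorial_form_le_wq x (B *m x) tau_ge0 sectB feas q_le1.
have := sectorial_form_le_wq (B *m x) y tau_ge0 sectA feas q_le1.
rewrite (unit_sqnorm hx) (unit_sqnorm hy) !mulr1.
rewrite [form B _ _]/form cdotii cabs_real ger0_norm ?sqnorm_ge0 // => hA_bound hB_bound.
rewrite ler_pdivlMr ?exprn_gt0 // mulrC /form -mulmxA.
by apply: sqr_bounds_combine hB_bound hA_bound;
  rewrite ?cabs_ge0 ?sqnorm_ge0 ?wq_ge0 ?addr_ge0 ?ler01 ?sqr_ge0.
Qed.

End NumericalRadius.

Theorem corollary2p12 (R : realType) (n : nat) (q : R[i]) (A B : 'M[R[i]]_n) :
  0 < cabs q -> cabs q <= 1 ->
  (forall alpha : R, 0 <= alpha -> alpha < pi / 2 ->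
     Pi_s alpha A -> Pi_s alpha B ->
     cabs q ^+ 2 * wq q (A *m B) <= (cos alpha)^-2 * (wq q A * wq q B)) /\
  (positive_mx A -> positive_mx B ->
     cabs q ^+ 2 * wq q (A *m B) <= wq q A * wq q B).
Proof.
(* The bound is trivial for q = 0. *)
move=> _ q_le1; split=> [alpha alpha_ge0 alpha_lt hA hB|hA hB].
  have pi_gt0 := pi_gt0 R.
  have cos_gt0 : 0 < cos alpha by apply: cos_gt0_pihalf; apply/andP; split; lra.
  have tan_ge0 : 0 <= tan alpha.
    by apply: divr_ge0; [apply: sin_ge0_pi; apply/andP; split; lra | exact: ltW].
  rewrite cos2_tan2 ?gt_eqF //.
  exact: wq_mul_sectorial_le tan_ge0 q_le1 (Pi_s_closed_sector hA) (Pi_s_closed_sector hB).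
have := wq_mul_sectorial_le _ q_le1 (Pi_s_closed_sector hA) (Pi_s_closed_sector hB).
by rewrite tan0 expr0n addr0 mul1r; apply.
Qed.
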